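(* Let $\mathcal{H}_O\simeq\mathbb{C}^{d_O}$ and $\mathcal{H}_K\simeq\mathbb{C}^{d_K}$, let $H=\sum_{n=1}^{d_Od_K}\lambda_n^{\uparrow}|\xi_n\rangle\langle\xi_n|$ be a Hamiltonian on $\mathcal{H}_O\otimes\mathcal{H}_K$ with $\lambda_1^\uparrow\leqslant\dots\leqslant\lambda^\uparrow_{d_Od_K}$ and $\{|\xi_n\rangle\}$ an orthonormal eigenbasis, let $\beta\in(0,\infty)$ and $\rho(\beta)=e^{-\beta H}/\mathrm{tr}[e^{-\beta H}]=\sum_n p_n^{\downarrow}|\xi_n\rangle\langle\xi_n|$. Fix a unit vector $|\Psi\rangle\in\mathcal{H}_O$. Let $\mathcal{U}_{\mathrm{maj}}$ be the set of unitaries $U$ on $\mathcal{H}_O\otimes\mathcal{H}_K$ for which there is an orthonormal basis $\{|\phi_j\rangle\}_{j=1}^{d_K}$ of $\mathcal{H}_K$ with $U|\xi_n\rangle=|\Psi\rangle\otimes|\phi_n\rangle$ for all $n\in\{1,\dots,d_K\}$ (these unitaries maximise $\langle\Psi|\mathrm{tr}_K[U\rho(\beta)U^\dagger]|\Psi\rangle$). For a unitary $U$ define $\Delta Q(U)=\mathrm{tr}[H(U\rho(\beta)U^\dagger-\rho(\beta))]$ and the vector $\mathbf{q}^U\in\mathbb{R}^{d_Od_K}$ by $q_n^U=\sum_{m=1}^{d_Od_K}p_m^{\downarrow}|\langle\xi_n|U|\xi_m\rangle|^2$. Suppose $U^1\in\mathcal{U}_{\mathrm{maj}}$ satisfies $q_1^{U^1}\geqslant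 q_2^{U^1}\geqslant\dots\geqslant q^{U^1}_{d_Od_K}$ and $(\mathbf{q}^{U})^{\downarrow}\prec(\mathbf{q}^{U^1})^{\downarrow}$ for all $U\in\mathcal{U}_{\mathrm{maj}}$. Then $\Delta Q(U^1)\leqslant\Delta Q(U)$ for all $U\in\mathcal{U}_{\mathrm{maj}}$.
   Context: $\mathrm{tr}_K$ denotes the partial trace over $\mathcal{H}_K$. For $\mathbf{a}\in\mathbb{R}^N$, $\mathbf{a}^\downarrow$ is its non-increasing rearrangement, and $\mathbf{a}\prec\mathbf{b}$ means $\sum_{i=1}^k a_i^\downarrow\leqslant\sum_{i=1}^k b_i^\downarrow$ for all $k$ with equality at $k=N$. *)

From HB Require Import structures.
From mathcomp Require Import all_boot all_order all_algebra.
From mathcomp Require Import reals sequences.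
From mathcomp Require Import complex spectral.
Set Implicit Arguments. Unset Strict Implicit. Unset Printing Implicit Defensive.
Import Order.TTheory GRing.Theory Num.Theory Num.Def.
Local Open Scope ring_scope.
Local Open Scope sesquilinear_scope.

Section QDefs.
Variable R : realType.
Local Notation C := R[i].

(* Vectors of C^n are stored as row vectors v; the ket |v> is the column
   vector v^T and the bra <v| is the row vector of complex conjugates. *)
Definition ket n (v : 'rV[C]_n) : 'cV[C]_n := v^T.
Definition bra n (v : 'rV[C]_n) : 'rV[C]_n := map_mx conjC v.

(* Tensor product C^m (x) C^n = C^(m*n), with basis vector e_i (x) e_j
   identified with index mxvec_index i j: entry (mxvec_index i j) = x i * y j. *)
Definition tensv m n (x : 'rV[C]_m) (y : 'rV[C]_n) : 'rV[C]_(m * n) :=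
  mxvec (x^T *m y).

Definition ketbra n (v : 'rV[C]_n) : 'M[C]_n := ket v *m bra v.

Definition gibbs_p N (lam : 'I_N -> R) (beta : R) (n : 'I_N) : R :=
  expR (- (beta * lam n)) / \sum_(m < N) expR (- (beta * lam m)).

(* rho(beta) = e^{-beta H}/tr e^{-beta H}, for H = sum_n lam_n |xi_n><xi_n|
   (xi_n = row n of Xi), via the spectral decomposition:
   rho(beta) = sum_n p_n |xi_n><xi_n|. *)
Definition gibbs_state N (lam : 'I_N -> R) (Xi : 'M[C]_N) (beta : R) : 'M[C]_N :=
  \sum_(n < N) (gibbs_p lam beta n)%:C%C *: ketbra (row n Xi).

Definition DeltaQ N (H rho U : 'M[C]_N) : C :=
  \tr (H *m (U *m rho *m U ^t* - rho)).

Definition qvec N (p : 'I_N -> R) (Xi U : 'M[C]_N) (n : 'I_N) : R :=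
  \sum_(m < N) p m * (Normc.normc ((bra (row n Xi) *m U *m ket (row m Xi)) 0 0)) ^+ 2.

Definition decr N (a : 'I_N -> R) : seq R := sort >=%R [seq a i | i <- enum 'I_N].

Definition majorized N (a b : 'I_N -> R) : Prop :=
  (forall k, (k <= N)%N ->
     \sum_(x <- take k (decr a)) x <= \sum_(x <- take k (decr b)) x) /\
  \sum_(x <- decr a) x = \sum_(x <- decr b) x.

(* U_maj: unitaries U on H_O (x) H_K such that for some orthonormal basis
   {phi_j} (rows of a unitary Phi) of H_K, U|xi_n> = |Psi> (x) |phi_n> for
   all n in {1..d_K} (0-based: n < d_K). *)
Definition Umaj dO dK (Psi : 'rV[C]_dO) (Xi U : 'M[C]_(dO * dK)) : Prop :=
  U \is unitarymx /\
  exists Phi : 'M[C]_dK, Phi \is unitarymx /\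
    forall (n : 'I_(dO * dK)) (hn : (n < dK)%N),
      U *m ket (row n Xi) = ket (tensv Psi (row (Ordinal hn) Phi)).

End QDefs.

From HB Require Import structures.
From mathcomp Require Import all_boot all_order all_algebra.
From mathcomp Require Import reals sequences.
From mathcomp Require Import complex spectral.
Import Order.TTheory GRing.Theory Num.Theory.
Local Open Scope ring_scope.
Local Open Scope sesquilinear_scope.

(* Expanding both Gibbs states in the eigenbasis gives
   tr[H U rho U^dagger] = sum_n lam_n q^U_n, and tr[H rho] does not depend on U.
   So it suffices that sum_n lam_n q^{U1}_n <= sum_n lam_n q^U_n, which follows
   by Abel summation: the lam_n are nondecreasing and, since q^{U1} is sorted
   and majorizes q^U, the partial sums of q^U - q^{U1} are nonpositive and
   total zero. *)

Section SortedPrefixSums.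
Variable R : realDomainType.

Let ge_trans : transitive (>=%R : rel R).
Proof. by move=> x y z hyx hzy; exact: le_trans hzy hyx. Qed.

Lemma sum_take_insert_sorted {a b : seq R} {x : R} {k : nat} :
  sorted >=%R (a ++ x :: b) ->
  x + \sum_(y <- take k (a ++ b)) y <= \sum_(y <- take k.+1 (a ++ x :: b)) y.
Proof.
elim: a k => [|y a IH] k /=; first by rewrite big_cons.
move=> hs; have le_xy : x <= y.
  by move: (order_path_min ge_trans hs) => /allP; apply; rewrite mem_cat mem_head orbT.
case: k => [|k] /=; first by rewrite !big_cons take0 !big_nil !addr0.
by rewrite !big_cons addrCA lerD2l; apply: IH; exact: path_sorted hs.
Qed.

Lemma sum_take_le_sorted_perm (s t : seq R) k :
  perm_eq s t -> sorted >=%R t ->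
  \sum_(y <- take k s) y <= \sum_(y <- take k t) y.
Proof.
elim: s t k => [|x s IH] t k hp hs.
  by move: (perm_size hp) => /= /esym /size0nil ->.
case: k => [|k]; first by rewrite !take0 !big_nil.
have xt : x \in t by rewrite -(perm_mem hp) mem_head.
case: (splitPr xt) hp hs => a b hp hs; rewrite [take _ (x :: s)]/= big_cons.
apply: le_trans (sum_take_insert_sorted hs); rewrite lerD2l; apply: IH.
- by rewrite -(perm_cons x) (perm_trans hp) // (perm_catCA a [:: x] b).
- by apply: (subseq_sorted ge_trans _ hs); rewrite cat_subseq // subseq_cons.
Qed.

End SortedPrefixSums.

Lemma abel_sum_ge0 (R : numDomainType) (l d : nat -> R) N :
  (forall i j, (i <= j < N)%N -> l i <= l j) ->
  (forall k, (k <= N)%N -> \sum_(0 <= i < k) d i <= 0) ->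
  \sum_(0 <= i < N) d i = 0 ->
  0 <= \sum_(0 <= i < N) l i * d i.
Proof.
move=> hl hd hd0.
suff abel_step n : (n <= N)%N ->
    l n.-1 * \sum_(0 <= i < n) d i <= \sum_(0 <= i < n) l i * d i.
  by have := abel_step N (leqnn N); rewrite hd0 mulr0.
elim: n => [|n IH] hn; first by rewrite !big_geq // mulr0.
have le_nN : (n <= N)%N by apply: ltnW.
rewrite !big_nat_recr //= mulrDr lerD2r; apply: le_trans (IH le_nN).
rewrite -subr_ge0 -mulrBl mulr_le0 ?hd // subr_le0.
by apply: hl; rewrite leq_pred hn.
Qed.

Section Majorization.
Variables (R : realType) (N : nat).
Implicit Types q : 'I_N -> R.

Definition vals q : seq R := [seq q j | j <- enum 'I_N].

Lemma size_vals q : size (vals q) = N.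
Proof. by rewrite size_map size_enum_ord. Qed.

Lemma nth_vals q (j : 'I_N) : nth 0 (vals q) j = q j.
Proof. by rewrite (nth_map j) ?nth_ord_enum // size_enum_ord. Qed.

Lemma perm_decr_vals q : perm_eq (decr q) (vals q).
Proof. by rewrite /decr perm_sort. Qed.

Lemma sum_nth_vals q k : (k <= N)%N ->
  \sum_(0 <= i < k) nth 0 (vals q) i = \sum_(y <- take k (vals q)) y.
Proof.
move=> hk; rewrite [RHS](big_nth 0) size_take size_vals.
rewrite (_ : (if _ then _ else _) = k); last by case: ltngtP hk => // ->.
by apply: eq_big_nat => i /andP[_ hi]; rewrite nth_take.
Qed.

Lemma decr_nonincreasing q :
  (forall n m : 'I_N, (n <= m)%N -> q m <= q n) -> decr q = vals q.
Proof.
move=> hq; apply: sorted_sort; first by move=> x y z hyx hzy; exact: le_trans hzy hyx.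
rewrite sorted_map; apply: (@sub_sorted _ (relpre val leq)) => [i j|]; first exact: hq.
by rewrite -sorted_map val_enum_ord iota_sorted.
Qed.

Lemma majorized_prefix_sum_le q q1 k : (k <= N)%N -> majorized q q1 ->
  (forall n m : 'I_N, (n <= m)%N -> q1 m <= q1 n) ->
  \sum_(0 <= i < k) nth 0 (vals q) i <= \sum_(0 <= i < k) nth 0 (vals q1) i.
Proof.
move=> hk [hmaj _] hq1; rewrite !sum_nth_vals // -(decr_nonincreasing q1 hq1).
apply: le_trans (hmaj k hk); apply: sum_take_le_sorted_perm; last exact: (sort_sorted (fun x y => le_total y x)).
by rewrite perm_sym perm_decr_vals.
Qed.

Lemma sum_nth_vals_decr q : \sum_(0 <= i < N) nth 0 (vals q) i = \sum_(y <- decr q) y.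
Proof.
rewrite sum_nth_vals // -[X in take X _](size_vals q) take_size.
by apply: perm_big; rewrite perm_sym perm_decr_vals.
Qed.

Lemma majorized_weighted_sum_le lam q q1 :
  (forall n m : 'I_N, (n <= m)%N -> lam n <= lam m) ->
  (forall n m : 'I_N, (n <= m)%N -> q1 m <= q1 n) ->
  majorized q q1 ->
  \sum_(i < N) lam i * q1 i <= \sum_(i < N) lam i * q i.
Proof.
move=> hlam hq1 hmaj; rewrite -subr_ge0 -sumrB.
rewrite (_ : \sum_(i < N) _ = \sum_(0 <= i < N)
    nth 0 (vals lam) i * (nth 0 (vals q) i - nth 0 (vals q1) i)); last first.
  by rewrite big_mkord; apply: eq_bigr => i _; rewrite !nth_vals mulrBr.
apply: abel_sum_ge0.
- move=> i j /andP[le_ij lt_jN]; have lt_iN := leq_ltn_trans le_ij lt_jN.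
  by move: (nth_vals lam (Ordinal lt_iN)) (nth_vals lam (Ordinal lt_jN)) => /= -> ->; exact: hlam.
- by move=> k hk; rewrite sumrB subr_le0 majorized_prefix_sum_le.
- by rewrite sumrB !sum_nth_vals_decr; case: hmaj => _ ->; rewrite subrr.
Qed.

End Majorization.

Section TraceFormula.
Variable R : realType.
Local Notation C := R[i].

Lemma mxtrace_ketbra_conj N (u v : 'rV[C]_N) (U : 'M[C]_N) :
  \tr (ketbra u *m (U *m ketbra v *m U ^t*)) =
    ((Normc.normc ((bra u *m U *m ket v) 0 0)) ^+ 2)%:C%C.
Proof.
set z := bra u *m U *m ket v.
have adj_z : bra v *m U ^t* *m ket u = map_mx Num.conj z^T.
  rewrite /z /bra /ket !trmx_mul !map_mxM trmxK !map_trmx.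
  by rewrite -map_mx_comp (map_mx_id (fun x => conjCK x)) mulmxA.
rewrite /ketbra -!mulmxA mxtrace_mulC.
rewrite (_ : _ *m ket u = z *m (bra v *m U ^t* *m ket u)); last by rewrite /z !mulmxA.
by rewrite adj_z /mxtrace big_ord1 !mxE big_ord1 !mxE -normCK rmorphXn.
Qed.

Lemma mxtrace_spectral_conj N (lam p : 'I_N -> R) (Xi U : 'M[C]_N) :
  \tr ((\sum_(n < N) (lam n)%:C%C *: ketbra (row n Xi)) *m
       (U *m (\sum_(m < N) (p m)%:C%C *: ketbra (row m Xi)) *m U ^t*)) =
  (\sum_(n < N) lam n * qvec p Xi U n)%:C%C.
Proof.
rewrite mulmx_sumr mulmx_suml mulmx_suml raddf_sum rmorph_sum /=.
apply: eq_bigr => n _.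
rewrite -scalemxAl mxtraceZ mulmx_sumr raddf_sum /= rmorphM /qvec rmorph_sum /=.
congr (_ * _); apply: eq_bigr => m _.
by rewrite -(scalemxAr _ U) -scalemxAl -scalemxAr mxtraceZ mxtrace_ketbra_conj [RHS]rmorphM.
Qed.

End TraceFormula.

Theorem proposition1 (R : realType) (dO dK : nat)
  (H : 'M[R[i]]_(dO * dK)) (lam : 'I_(dO * dK) -> R) (Xi : 'M[R[i]]_(dO * dK))
  (beta : R) (Psi : 'rV[R[i]]_dO) (U1 : 'M[R[i]]_(dO * dK)) :
  (forall n m : 'I_(dO * dK), (n <= m)%N -> lam n <= lam m) ->
  Xi \is unitarymx ->
  H = \sum_(n < dO * dK) (lam n)%:C%C *: ketbra (row n Xi) ->
  0 < beta ->
  \sum_(i < dO) Psi 0 i * (Psi 0 i)^* = 1 ->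
  Umaj Psi Xi U1 ->
  (forall n m : 'I_(dO * dK), (n <= m)%N ->
     qvec (gibbs_p lam beta) Xi U1 m <= qvec (gibbs_p lam beta) Xi U1 n) ->
  (forall U, Umaj Psi Xi U ->
     majorized (qvec (gibbs_p lam beta) Xi U) (qvec (gibbs_p lam beta) Xi U1)) ->
  forall U, Umaj Psi Xi U ->
    DeltaQ H (gibbs_state lam Xi beta) U1 <= DeltaQ H (gibbs_state lam Xi beta) U.
Proof.
move=> hlam _ -> _ _ _ hq1 hmaj U hU.
rewrite /DeltaQ /gibbs_state !mulmxBr !raddfB /= lerD2r.
rewrite !mxtrace_spectral_conj lecR.
exact: majorized_weighted_sum_le hlam hq1 (hmaj U hU).
Qed.
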